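(* Let $A$ be a Banach algebra with $A^*A=A^*$. If $aa''\in Z_1(A^{**})$ for all $a\in A$ and $a''\in A^{**}$, then $A$ is Arens regular.
   Context: $A^{**}$ carries the first Arens product: for $a''=w^*\text{-}\lim_\alpha a_\alpha$, $b''=w^*\text{-}\lim_\beta b_\beta$ ($a_\alpha,b_\beta\in A$) and $a'\in A^*$, $\langle a''b'',a'\rangle=\lim_\alpha\lim_\beta\langle a',a_\alpha b_\beta\rangle$; the second Arens product is $\langle a''\circ b'',a'\rangle=\lim_\beta\lim_\alpha\langle a',a_\alpha b_\beta\rangle$. $A$ is Arens regular if the two products coincide. $Z_1(A^{**})$ is the set of $a''\in A^{**}$ such that $b''\mapsto a''b''$ is weak$^*$-to-weak$^*$ continuous. For $a'\in A^*$, $a\in A$, $\langle a'a,b\rangle=\langle a',ab\rangle$, and $A^*A=\{a'a:a'\in A^*,a\in A\}$. *)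

From Stdlib Require Import Reals.
Open Scope R_scope.

Record BanachAlgebra := {
  ba_car :> Type;
  ba_zero : ba_car;
  ba_add : ba_car -> ba_car -> ba_car;
  ba_opp : ba_car -> ba_car;
  ba_scal : R -> ba_car -> ba_car;
  ba_mul : ba_car -> ba_car -> ba_car;
  ba_norm : ba_car -> R;
  ba_addA : forall x y z, ba_add x (ba_add y z) = ba_add (ba_add x y) z;
  ba_addC : forall x y, ba_add x y = ba_add y x;
  ba_add0 : forall x, ba_add x ba_zero = x;
  ba_addN : forall x, ba_add x (ba_opp x) = ba_zero;
  ba_scal1 : forall x, ba_scal 1 x = x;
  ba_scalA : forall r s x, ba_scal r (ba_scal s x) = ba_scal (r * s) x;
  ba_scalDr : forall r x y, ba_scal r (ba_add x y) = ba_add (ba_scal r x) (ba_scal r y);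
  ba_scalDl : forall r s x, ba_scal (r + s) x = ba_add (ba_scal r x) (ba_scal s x);
  ba_norm_ge0 : forall x, 0 <= ba_norm x;
  ba_norm_eq0 : forall x, ba_norm x = 0 -> x = ba_zero;
  ba_normZ : forall r x, ba_norm (ba_scal r x) = Rabs r * ba_norm x;
  ba_normD : forall x y, ba_norm (ba_add x y) <= ba_norm x + ba_norm y;
  ba_complete : forall u : nat -> ba_car,
    (forall eps, 0 < eps -> exists N, forall m n, (N <= m)%nat -> (N <= n)%nat ->
        ba_norm (ba_add (u m) (ba_opp (u n))) < eps) ->
    exists l, forall eps, 0 < eps -> exists N, forall n, (N <= n)%nat ->
        ba_norm (ba_add (u n) (ba_opp l)) < eps;
  ba_mulA : forall x y z, ba_mul x (ba_mul y z) = ba_mul (ba_mul x y) z;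
  ba_mulDl : forall x y z, ba_mul (ba_add x y) z = ba_add (ba_mul x z) (ba_mul y z);
  ba_mulDr : forall x y z, ba_mul x (ba_add y z) = ba_add (ba_mul x y) (ba_mul x z);
  ba_mulZl : forall r x y, ba_mul (ba_scal r x) y = ba_scal r (ba_mul x y);
  ba_mulZr : forall r x y, ba_mul x (ba_scal r y) = ba_scal r (ba_mul x y);
  ba_normM : forall x y, ba_norm (ba_mul x y) <= ba_norm x * ba_norm y
}.

Section Arens.
Variable A : BanachAlgebra.

Definition is_dual (f : A -> R) : Prop :=
  (forall x y, f (ba_add A x y) = f x + f y) /\
  (forall r x, f (ba_scal A r x) = r * f x) /\
  (exists M, forall x, Rabs (f x) <= M * ba_norm A x).

(* A^{**} : bounded linear functionals on A^{*} (with the operator norm on A^{*},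
   written out: |F f| <= M * c whenever c >= 0 bounds f) *)
Definition is_bidual (F : (A -> R) -> R) : Prop :=
  (forall f g, is_dual f -> is_dual g -> F (fun x => f x + g x) = F f + F g) /\
  (forall r f, is_dual f -> F (fun x => r * f x) = r * F f) /\
  (exists M, forall f c, is_dual f -> 0 <= c ->
      (forall x, Rabs (f x) <= c * ba_norm A x) -> Rabs (F f) <= M * c).

Definition dmulr (f : A -> R) (a : A) : A -> R := fun b => f (ba_mul A a b).

Definition hat (a : A) : (A -> R) -> R := fun f => f a.

(* first Arens product: <a''b'', a'> = <a'', b''a'>, <b''a', a> = <b'', a'a>;
   equals lim_alpha lim_beta <a', a_alpha b_beta> *)
Definition arens1 (F G : (A -> R) -> R) : (A -> R) -> R :=
  fun f => F (fun a => G (dmulr f a)).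

(* second Arens product: equals lim_beta lim_alpha <a', a_alpha b_beta> *)
Definition arens2 (F G : (A -> R) -> R) : (A -> R) -> R :=
  fun f => G (fun b => F (fun a => f (ba_mul A a b))).

Definition arens_regular : Prop :=
  forall F G, is_bidual F -> is_bidual G ->
    forall f, is_dual f -> arens1 F G f = arens2 F G f.

Definition dual_factors : Prop :=
  (forall f a, is_dual f -> is_dual (dmulr f a)) /\
  (forall f, is_dual f -> exists g a, is_dual g /\ forall x, f x = dmulr g a x).

End Arens.

Record directed := {
  dir_car :> Type;
  dir_le : dir_car -> dir_car -> Prop;
  dir_inh : dir_car;
  dir_refl : forall i, dir_le i i;
  dir_trans : forall i j k, dir_le i j -> dir_le j k -> dir_le i k;
  dir_up : forall i j, exists k, dir_le i k /\ dir_le j k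
}.

Definition net_conv (D : directed) (x : D -> R) (l : R) : Prop :=
  forall eps, 0 < eps -> exists i0, forall i, dir_le D i0 i -> Rabs (x i - l) < eps.

Definition wstar_conv (A : BanachAlgebra) (D : directed)
  (N : D -> (A -> R) -> R) (F : (A -> R) -> R) : Prop :=
  forall f, is_dual A f -> net_conv D (fun i => N i f) (F f).

Definition Z1 (A : BanachAlgebra) (F : (A -> R) -> R) : Prop :=
  forall (D : directed) (N : D -> (A -> R) -> R) (G : (A -> R) -> R),
    (forall i, is_bidual A (N i)) -> is_bidual A G ->
    wstar_conv A D N G ->
    wstar_conv A D (fun i => arens1 A F (N i)) (arens1 A F G).

(* If H lies in Z_1 then H G = H o G for every G. Indeed A is weak*-dense in its bidual (on
   finitely many functionals every G is matched by some a in A), and for a in A both H a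
   and H o a act on f as <f o H, a>; weak*-continuity of G |-> H G carries the identity to
   the limit G. For general F factor f = g c in A^* A: then F G f and (F o G) f are the two
   products of H = c F evaluated at g, and c F lies in Z_1 by hypothesis. *)
From Stdlib Require Import Reals Lra List Classical FunctionalExtensionality
  IndefiniteDescription.
Open Scope R_scope.
Import ListNotations.

Section Nets.
Variable D : directed.

Lemma net_conv_eventually_const (x : D -> R) (l : R) (i0 : D) :
  (forall i, dir_le D i0 i -> x i = l) -> net_conv D x l.
Proof.
  intros Hx eps Heps. exists i0. intros i Hi.
  rewrite (Hx i Hi), Rminus_diag, Rabs_R0. exact Heps.
Qed.

Lemma net_conv_eventually_const_eq (x : D -> R) (l l' : R) (i0 : D) :
  net_conv D x l -> (forall i, dir_le D i0 i -> x i = l') -> l = l'.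
Proof.
  intros Hconv Hx. apply NNPP. intro Hne.
  assert (Hpos : 0 < Rabs (l' - l)) by (apply Rabs_pos_lt; lra).
  destruct (Hconv _ Hpos) as [i1 Hi1].
  destruct (dir_up D i0 i1) as [k [Hk0 Hk1]].
  specialize (Hi1 k Hk1). rewrite (Hx k Hk0) in Hi1. lra.
Qed.

End Nets.

Lemma incl_upper_bound {T : Type} (l m : list T) : exists k, incl l k /\ incl m k.
Proof. exists (l ++ m). split; [apply incl_appl | apply incl_appr]; apply incl_refl. Qed.

Section Arens.
Variable A : BanachAlgebra.

Definition is_linear (f : A -> R) : Prop :=
  (forall x y, f (ba_add A x y) = f x + f y) /\ (forall r x, f (ba_scal A r x) = r * f x).

Definition kernel (S : list (A -> R)) (x : A) : Prop := forall g, In g S -> g x = 0.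

Fixpoint in_span (S : list (A -> R)) (f : A -> R) : Prop :=
  match S with
  | nil => forall x, f x = 0
  | g :: S' => exists c, in_span S' (fun x => f x - c * g x)
  end.

Lemma is_dual_linear (f : A -> R) : is_dual A f -> is_linear f.
Proof. intros [Hadd [Hscal _]]. split; assumption. Qed.

Lemma is_linear_sub_scal (f g : A -> R) (c : R) :
  is_linear f -> is_linear g -> is_linear (fun x => f x - c * g x).
Proof. intros [Hf1 Hf2] [Hg1 Hg2]. split; intros; rewrite ?Hf1, ?Hg1, ?Hf2, ?Hg2; ring. Qed.

Lemma is_dual_sub_scal (f g : A -> R) (c : R) :
  is_dual A f -> is_dual A g -> is_dual A (fun x => f x - c * g x).
Proof.
  intros [Hf1 [Hf2 [Mf Hf]]] [Hg1 [Hg2 [Mg Hg]]]. split; [| split].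
  - intros. rewrite Hf1, Hg1. ring.
  - intros. rewrite Hf2, Hg2. ring.
  - exists (Mf + Rabs c * Mg). intro x.
    unfold Rminus. eapply Rle_trans; [apply Rabs_triang |].
    rewrite Rabs_Ropp, Rabs_mult.
    specialize (Hf x). specialize (Hg x).
    assert (Rabs c * Rabs (g x) <= Rabs c * (Mg * ba_norm A x))
      by (apply Rmult_le_compat_l; [apply Rabs_pos | exact Hg]).
    nra.
Qed.

Lemma is_dual_scal (f : A -> R) (c : R) : is_dual A f -> is_dual A (fun x => c * f x).
Proof.
  intros [Hf1 [Hf2 [Mf Hf]]]. split; [| split].
  - intros. rewrite Hf1. ring.
  - intros. rewrite Hf2. ring.
  - exists (Rabs c * Mf). intro x. rewrite Rabs_mult, Rmult_assoc.
    apply Rmult_le_compat_l; [apply Rabs_pos | exact (Hf x)].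
Qed.

Lemma bidual_zero (G : (A -> R) -> R) (f : A -> R) :
  is_bidual A G -> is_dual A f -> (forall x, f x = 0) -> G f = 0.
Proof.
  intros [_ [Hscal _]] Hf Hzero.
  assert (E : f = fun x => 0 * f x) by (extensionality x; rewrite Hzero; ring).
  rewrite E, Hscal by exact Hf. ring.
Qed.

Lemma bidual_sub_scal (G : (A -> R) -> R) (f g : A -> R) (c : R) :
  is_bidual A G -> is_dual A f -> is_dual A g ->
  G (fun x => f x - c * g x) = G f - c * G g.
Proof.
  intros [Hadd [Hscal _]] Hf Hg.
  assert (E : (fun x => f x - c * g x) = (fun x => f x + (fun y => - c * g y) x))
    by (extensionality x; ring).
  rewrite E, Hadd, Hscal by (try apply is_dual_scal; assumption). ring.
Qed.

Lemma in_span_of_kernel (S : list (A -> R)) (f : A -> R) :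
  (forall g, In g S -> is_linear g) -> is_linear f ->
  (forall x, kernel S x -> f x = 0) -> in_span S f.
Proof.
  revert f. induction S as [| g S IH]; intros f HS Hf Hker; simpl.
  - intro x. apply Hker. intros h [].
  - assert (HS' : forall h, In h S -> is_linear h) by (intros h Hh; apply HS; right; exact Hh).
    assert (Hg : is_linear g) by (apply HS; left; reflexivity).
    destruct (classic (exists k, kernel S k /\ g k <> 0)) as [[k [Hk Hgk]] | Hno].
    + exists (f k / g k). apply IH; [exact HS' | apply is_linear_sub_scal; assumption |].
      intros x Hx.
      set (y := ba_add A x (ba_scal A (- (g x / g k)) k)).
      assert (Hy : kernel (g :: S) y).
      { intros h [<- | Hh]; unfold y.
        - destruct Hg as [Hadd Hscal]. rewrite Hadd, Hscal. field. exact Hgk.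
        - destruct (HS' h Hh) as [Hadd Hscal].
          rewrite Hadd, Hscal, (Hx h Hh), (Hk h Hh). ring. }
      specialize (Hker y Hy). unfold y in Hker.
      destruct Hf as [Hadd Hscal]. rewrite Hadd, Hscal in Hker.
      replace (f x - f k / g k * g x) with (f x + - (g x / g k) * f k) by (field; exact Hgk).
      exact Hker.
    + exists 0. apply IH; [exact HS' | apply is_linear_sub_scal; assumption |].
      intros x Hx. rewrite Hker; [ring |]. intros h [<- | Hh].
      * apply NNPP. intro Hgx. apply Hno. exists x. split; assumption.
      * apply Hx. exact Hh.
Qed.

Lemma bidual_eq_on_span (G : (A -> R) -> R) (a : A) (S : list (A -> R)) (f : A -> R) :
  is_bidual A G -> (forall g, In g S -> is_dual A g) ->
  (forall g, In g S -> g a = G g) ->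
  is_dual A f -> in_span S f -> f a = G f.
Proof.
  intros HG. revert f. induction S as [| g S IH]; intros f HS Ha Hf Hspan; simpl in Hspan.
  - rewrite Hspan, (bidual_zero G f HG Hf Hspan). reflexivity.
  - destruct Hspan as [c Hc].
    assert (Hg : is_dual A g) by (apply HS; left; reflexivity).
    assert (IHc := IH _ (fun h Hh => HS h (or_intror Hh)) (fun h Hh => Ha h (or_intror Hh))
                      (is_dual_sub_scal f g c Hf Hg) Hc).
    simpl in IHc. rewrite bidual_sub_scal, <- (Ha g (or_introl eq_refl)) in IHc by assumption.
    lra.
Qed.

(* Algebraic form of Goldstine's theorem: on finitely many functionals every element of
   A** is matched by an element of A. *)
Lemma bidual_interpolation (G : (A -> R) -> R) (S : list (A -> R)) :
  is_bidual A G -> (forall g, In g S -> is_dual A g) ->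
  exists a, forall g, In g S -> g a = G g.
Proof.
  intros HG. induction S as [| f S IH]; intros HS.
  - exists (ba_zero A). intros g [].
  - assert (HS' : forall h, In h S -> is_dual A h) by (intros h Hh; apply HS; right; exact Hh).
    assert (Hf : is_dual A f) by (apply HS; left; reflexivity).
    destruct (IH HS') as [a0 Ha0].
    destruct (classic (exists k, kernel S k /\ f k <> 0)) as [[k [Hk Hfk]] | Hno].
    + exists (ba_add A a0 (ba_scal A ((G f - f a0) / f k) k)).
      intros h [<- | Hh].
      * destruct (is_dual_linear f Hf) as [Hadd Hscal]. rewrite Hadd, Hscal. field. exact Hfk.
      * destruct (is_dual_linear h (HS' h Hh)) as [Hadd Hscal].
        rewrite Hadd, Hscal, (Ha0 h Hh), (Hk h Hh). ring.
    + exists a0. intros h [<- | Hh]; [| apply Ha0; exact Hh].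
      apply (bidual_eq_on_span G a0 S f HG HS' Ha0 Hf).
      apply in_span_of_kernel.
      * intros g Hg. apply is_dual_linear, HS', Hg.
      * apply is_dual_linear, Hf.
      * intros x Hx. apply NNPP. intro Hfx. apply Hno. exists x. split; assumption.
Qed.

Definition dual_lists : directed :=
  {| dir_car := list {f : A -> R | is_dual A f};
     dir_le := @incl _;
     dir_inh := nil;
     dir_refl := @incl_refl _;
     dir_trans := @incl_tran _;
     dir_up := incl_upper_bound |}.

Lemma bidual_interpolation_net (G : (A -> R) -> R) : is_bidual A G ->
  exists a : dual_lists -> A,
    forall (S : dual_lists) g, In g S -> proj1_sig g (a S) = G (proj1_sig g).
Proof.
  intros HG.
  assert (HS : forall S : dual_lists, forall g, In g (map (@proj1_sig _ _) S) -> is_dual A g).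
  { intros S g Hg. apply in_map_iff in Hg. destruct Hg as [[h Hh] [<- _]]. exact Hh. }
  exists (fun S => proj1_sig (constructive_indefinite_description _
                    (bidual_interpolation G _ HG (HS S)))).
  intros S g Hg.
  destruct (constructive_indefinite_description _ _) as [a Ha]. simpl.
  apply Ha, in_map, Hg.
Qed.

Lemma hat_net_wstar_conv (G : (A -> R) -> R) (a : dual_lists -> A) :
  (forall (S : dual_lists) g, In g S -> proj1_sig g (a S) = G (proj1_sig g)) ->
  wstar_conv A dual_lists (fun S => hat A (a S)) G.
Proof.
  intros Ha f Hf. apply (net_conv_eventually_const dual_lists _ _ [exist _ f Hf]).
  intros S HS. exact (Ha S (exist _ f Hf) (HS _ (or_introl eq_refl))).
Qed.

Lemma is_bidual_hat (a : A) : is_bidual A (hat A a).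
Proof.
  split; [| split]; [reflexivity | reflexivity |].
  exists (ba_norm A a). intros f c _ _ Hbound. unfold hat. rewrite Rmult_comm. apply Hbound.
Qed.

Definition dmull (f : A -> R) (b : A) : A -> R := fun a => f (ba_mul A a b).

(* f o H in the notation of the second Arens product: arens2 H G f = G (dual_bimul f H). *)
Definition dual_bimul (f : A -> R) (H : (A -> R) -> R) : A -> R := fun b => H (dmull f b).

Lemma dmull_bound (f : A -> R) (M : R) (b : A) :
  (forall x, Rabs (f x) <= M * ba_norm A x) ->
  forall a, Rabs (dmull f b a) <= (Rabs M * ba_norm A b) * ba_norm A a.
Proof.
  intros Hf a. unfold dmull. eapply Rle_trans; [apply Hf |].
  eapply Rle_trans; [apply Rmult_le_compat_r; [apply ba_norm_ge0 | apply Rle_abs] |].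
  rewrite Rmult_assoc, (Rmult_comm (ba_norm A b)).
  apply Rmult_le_compat_l; [apply Rabs_pos | apply ba_normM].
Qed.

Lemma is_dual_dmull (f : A -> R) (b : A) : is_dual A f -> is_dual A (dmull f b).
Proof.
  intros [Hadd [Hscal [M Hf]]]. unfold dmull. split; [| split].
  - intros. rewrite ba_mulDl, Hadd. reflexivity.
  - intros. rewrite ba_mulZl, Hscal. reflexivity.
  - exists (Rabs M * ba_norm A b). exact (dmull_bound f M b Hf).
Qed.

Lemma is_dual_dmulr (f : A -> R) (c : A) : is_dual A f -> is_dual A (dmulr A f c).
Proof.
  intros [Hadd [Hscal [M Hf]]]. unfold dmulr. split; [| split].
  - intros. rewrite ba_mulDr, Hadd. reflexivity.
  - intros. rewrite ba_mulZr, Hscal. reflexivity.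
  - exists (Rabs M * ba_norm A c). intro b.
    eapply Rle_trans; [apply Hf |].
    eapply Rle_trans; [apply Rmult_le_compat_r; [apply ba_norm_ge0 | apply Rle_abs] |].
    rewrite Rmult_assoc. apply Rmult_le_compat_l; [apply Rabs_pos | apply ba_normM].
Qed.

Lemma is_dual_dual_bimul (f : A -> R) (H : (A -> R) -> R) :
  is_dual A f -> is_bidual A H -> is_dual A (dual_bimul f H).
Proof.
  intros Hf [Hadd [Hscal [MH HH]]].
  pose proof Hf as [Hf1 [Hf2 [Mf HMf]]].
  unfold dual_bimul. split; [| split].
  - intros x y.
    assert (E : dmull f (ba_add A x y) = fun a => dmull f x a + dmull f y a)
      by (extensionality a; unfold dmull; rewrite ba_mulDr, Hf1; reflexivity).
    rewrite E. apply Hadd; apply is_dual_dmull; exact Hf.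
  - intros r x.
    assert (E : dmull f (ba_scal A r x) = fun a => r * dmull f x a)
      by (extensionality a; unfold dmull; rewrite ba_mulZr, Hf2; reflexivity).
    rewrite E. apply Hscal. apply is_dual_dmull. exact Hf.
  - exists (MH * Rabs Mf). intro x.
    eapply Rle_trans.
    + apply (HH _ (Rabs Mf * ba_norm A x)).
      * apply is_dual_dmull. exact Hf.
      * apply Rmult_le_pos; [apply Rabs_pos | apply ba_norm_ge0].
      * exact (dmull_bound f Mf x HMf).
    + right. ring.
Qed.

Lemma is_bidual_arens1_hat (c : A) (F : (A -> R) -> R) :
  is_bidual A F -> is_bidual A (arens1 A (hat A c) F).
Proof.
  intros [Hadd [Hscal [MF HF]]]. unfold arens1, hat. split; [| split].
  - intros f g Hf Hg.
    change (F (fun x => dmulr A f c x + dmulr A g c x) = F (dmulr A f c) + F (dmulr A g c)).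
    apply Hadd; apply is_dual_dmulr; assumption.
  - intros r f Hf.
    change (F (fun x => r * dmulr A f c x) = r * F (dmulr A f c)).
    apply Hscal. apply is_dual_dmulr. exact Hf.
  - exists (MF * ba_norm A c). intros f b Hf Hb Hbound.
    eapply Rle_trans.
    + apply (HF _ (b * ba_norm A c)).
      * apply is_dual_dmulr. exact Hf.
      * apply Rmult_le_pos; [exact Hb | apply ba_norm_ge0].
      * intro x. unfold dmulr. eapply Rle_trans; [apply Hbound |].
        rewrite Rmult_assoc. apply Rmult_le_compat_l; [exact Hb | apply ba_normM].
    + right. ring.
Qed.

Lemma arens1_eq_arens2_of_Z1 (H G : (A -> R) -> R) (f : A -> R) :
  is_bidual A H -> Z1 A H -> is_bidual A G -> is_dual A f ->
  arens1 A H G f = arens2 A H G f.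
Proof.
  intros HH HZ HG Hf.
  destruct (bidual_interpolation_net G HG) as [a Ha].
  assert (Hlim := HZ _ _ G (fun S => is_bidual_hat (a S)) HG (hat_net_wstar_conv G a Ha) f Hf).
  set (phi := exist _ (dual_bimul f H) (is_dual_dual_bimul f H Hf HH) : {g | is_dual A g}).
  apply (net_conv_eventually_const_eq dual_lists _ _ _ [phi] Hlim).
  intros S HS. exact (Ha S phi (HS _ (or_introl eq_refl))).
Qed.

Lemma arens1_hat_dmulr (c : A) (F G : (A -> R) -> R) (g : A -> R) :
  arens1 A (arens1 A (hat A c) F) G g = arens1 A F G (dmulr A g c).
Proof.
  unfold arens1, hat, dmulr. f_equal. extensionality a. f_equal.
  extensionality b. rewrite ba_mulA. reflexivity.
Qed.

Lemma arens2_hat_dmulr (c : A) (F G : (A -> R) -> R) (g : A -> R) :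
  arens2 A (arens1 A (hat A c) F) G g = arens2 A F G (dmulr A g c).
Proof.
  unfold arens2, arens1, hat, dmulr. f_equal. extensionality b. f_equal.
  extensionality a. rewrite ba_mulA. reflexivity.
Qed.

End Arens.

Theorem mainTheorem14 (A : BanachAlgebra) :
  dual_factors A ->
  (forall (a : A) (F : (A -> R) -> R), is_bidual A F -> Z1 A (arens1 A (hat A a) F)) ->
  arens_regular A.
Proof.
  intros [_ Hfactor] HZ F G HF HG f Hf.
  destruct (Hfactor f Hf) as [g [c [Hg Hfg]]].
  replace f with (dmulr A g c) by (extensionality x; symmetry; apply Hfg).
  rewrite <- arens1_hat_dmulr, <- arens2_hat_dmulr.
  apply arens1_eq_arens2_of_Z1; auto using is_bidual_arens1_hat.
Qed.
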